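(* Let $\alpha>0$, $h>0$, $D_x>0$, $D_y>0$ and $C>0$. Let $x_m\sim\mathrm{Unif}[0,D_x]$ and $y_m\sim\mathrm{Unif}[-D_y/2,D_y/2]$ be independent. Place the pinching antenna at $x_p=x_m$, so that the received SNR is $\gamma_r=\frac{\eta P_t e^{-\alpha x_m}}{\sigma^2(y_m^2+h^2)}$. Let $P_{out}=\Pr(\gamma_r\le\gamma_{\mathrm{thr}})$. Then $P_{out}$ is given by the following case distinction. (i) If $h^2\ge C$: $P_{out}=1$. (ii) If $h^2\le C$, $h^2\ge C-\frac{D_y^2}{4}$ and $h^2\ge Ce^{-\alpha D_x}$: $P_{out}=1+\frac{4}{\alpha D_xD_y}\left(h\tan^{-1}\!\left(\frac{\sqrt{C-h^2}}{h}\right)-\sqrt{C-h^2}\right)$. (iii) If $h^2\le C-\frac{D_y^2}{4}$ and $h^2\ge Ce^{-\alpha D_x}$: $P_{out}=1+\frac{\ln\left(\frac{h^2}{C}+\frac{D_y^2}{4C}\right)-2}{\alpha D_x}+\frac{4h\tan^{-1}\left(\frac{D_y}{2h}\right)}{\alpha D_xD_y}$. (iv) If $h^2\ge C-\frac{D_y^2}{4}$ and $h^2\le Ce^{-\alpha D_x}$: $P_{out}=1+\frac{4}{\alpha D_xD_y}\Big(\sqrt{Ce^{-\alpha D_x}-h^2}-h\tan^{-1}\!\big(\tfrac{\sqrt{Ce^{-\alpha D_x}-h^2}}{h}\big)-\sqrt{C-h^2}+h\tan^{-1}\!\big(\tfrac{\sqrt{C-h^2}}{h}\big)\Big)$. (v)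 If $h^2\le C-\frac{D_y^2}{4}$, $h^2\le Ce^{-\alpha D_x}$ and $h^2\ge Ce^{-\alpha D_x}-\frac{D_y^2}{4}$: $P_{out}=1+\frac{4}{\alpha D_xD_y}\Big(\sqrt{Ce^{-\alpha D_x}-h^2}-h\tan^{-1}\!\big(\tfrac{\sqrt{Ce^{-\alpha D_x}-h^2}}{h}\big)-\frac{D_y}{2}+h\tan^{-1}\!\big(\tfrac{D_y}{2h}\big)\Big)+\frac{\ln\left(\frac{h^2}{C}+\frac{D_y^2}{4C}\right)}{\alpha D_x}$. (vi) If $h^2\le Ce^{-\alpha D_x}-\frac{D_y^2}{4}$: $P_{out}=0$.
   Context: Pinching-antenna system: a dielectric waveguide lies parallel to the $x$-axis at height $h$, fed at $(0,0,h)$, spanning $x\in[0,D_x]$. A single pinching antenna is at $(x_p,0,h)$, $x_p\in[0,D_x]$; a single-antenna user is at $(x_m,y_m,0)$. The waveguide has absorption coefficient $\alpha$ (power attenuates as $e^{-\alpha x_p}$). The received SNR is $\gamma_r=\frac{\eta P_t e^{-\alpha x_p}}{\sigma^2\left((x_m-x_p)^2+y_m^2+h^2\right)}$, where $\eta=\lambda^2/(16\pi^2)>0$, $P_t>0$ is the transmit power, $\sigma^2>0$ the noise variance. $\gamma_{\mathrm{thr}}>0$ is the SNR threshold and $C=\frac{\eta P_t}{\gamma_{\mathrm{thr}}\sigma^2}$. *)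

From HB Require Import structures.
From mathcomp Require Import all_boot all_order all_algebra.
From mathcomp Require Import all_classical all_reals all_analysis.
Set Implicit Arguments. Unset Strict Implicit. Unset Printing Implicit Defensive.
Import Order.TTheory GRing.Theory Num.Theory.
Local Open Scope classical_set_scope.
Local Open Scope ring_scope.

(* Received SNR with the pinching antenna placed at x_p = x_m:
   gamma_r = eta Pt e^{-alpha x_m} / (sigma2 ((x_m - x_p)^2 + y_m^2 + h^2)). *)
Definition snr_r {R : realType} (eta Pt sigma2 alpha h xm ym : R) : R :=
  eta * Pt * expR (- (alpha * xm)) /
    (sigma2 * ((xm - xm) ^+ 2 + ym ^+ 2 + h ^+ 2)).

(* Outage event, as a subset of the (x_m, y_m) sample space R x R,
   restricted to the support [0,Dx] x [-Dy/2, Dy/2] of the joint law. *)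
Definition outage_set {R : realType} (eta Pt sigma2 gthr alpha h Dx Dy : R)
  : set (R * R) :=
  [set z | (0 <= z.1 <= Dx) /\ (- (Dy / 2) <= z.2 <= Dy / 2) /\
           snr_r eta Pt sigma2 alpha h z.1 z.2 <= gthr].

(* P_out = Pr(gamma_r <= gthr) where x_m ~ Unif[0,Dx], y_m ~ Unif[-Dy/2,Dy/2]
   independent: the joint law is the product Lebesgue measure normalised by
   1/(Dx Dy) on the rectangle. *)
Definition Pout {R : realType} (eta Pt sigma2 gthr alpha h Dx Dy : R) : \bar R :=
  ((Dx * Dy)^-1)%:E *
  ((@lebesgue_measure R) \x (@lebesgue_measure R))
     (outage_set eta Pt sigma2 gthr alpha h Dx Dy).

From HB Require Import structures.
From mathcomp Require Import all_boot all_order all_algebra.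
From mathcomp Require Import all_classical all_reals all_analysis.
From mathcomp Require Import lra ring measurable_realfun.
Set Implicit Arguments. Unset Strict Implicit. Unset Printing Implicit Defensive.
Import Order.TTheory GRing.Theory Num.Theory numFieldNormedType.Exports.
Local Open Scope classical_set_scope.
Local Open Scope ring_scope.

(* With x_p = x_m there is an outage at (x, y) iff C e^(-alpha x) <= y^2 + h^2,
   i.e. iff |y| >= u(x) := sqrt (C e^(-alpha x) - h^2).  Integrating the
   y-sections, P_out is 1/(Dx Dy) times the integral over [0, Dx] of the
   outage length 2b - 2 min(b, u(x)), b = Dy/2.  As x grows, u decreases: it
   passes b at x_band and reaches 0 at x_clear.  Before x_band the integrand
   vanishes, after x_clear it is 2b, and in between 2b - 2u has the primitive
   2 b x + (4/alpha) (u - h atan(u/h)).  The six cases are the possible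
   positions of x_band and x_clear relative to [0, Dx]. *)

Section Calculus.
Variable R : realType.
Implicit Types (f F : R -> R) (a c d x df : R).

Lemma is_derive_continuous f x df : is_derive x 1 f df -> {for x, continuous f}.
Proof.
by move=> fx; apply: differentiable_continuous; apply/derivable1_diffP; exact: ex_derive.
Qed.

Lemma integral_itv_cc_split f a c d : a <= c -> c <= d -> continuous f ->
  (\int[lebesgue_measure]_(x in `[a, d]) (f x)%:E =
   \int[lebesgue_measure]_(x in `[a, c]) (f x)%:E +
   \int[lebesgue_measure]_(x in `[c, d]) (f x)%:E)%E.
Proof.
move=> ac cd cf.
rewrite (@itv_bndbnd_setU _ _ (BLeft a) (BRight c) (BRight d)) //.
rewrite integral_setU //.
- rewrite integral_itv_obnd_cbnd //.
  apply: measurable_funS (_ : measurable_fun setT _) => //.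
  by apply/measurable_EFinP; exact: continuous_measurable_fun.
- apply: measurable_funS (_ : measurable_fun setT _) => //.
  by apply/measurable_EFinP; exact: continuous_measurable_fun.
- rewrite disj_set2E; apply/eqP/seteqP; split => // x /=; rewrite !in_itv /=.
  by move=> [/andP[_ xc] /andP[cx _]]; lra.
Qed.

Lemma integral_itv_cc_primitive f F a c : a <= c -> continuous f -> continuous F ->
  (forall x, a < x < c -> is_derive x 1 F (f x)) ->
  (\int[lebesgue_measure]_(x in `[a, c]) (f x)%:E = (F c - F a)%:E)%E.
Proof.
rewrite le_eqVlt => /predU1P[<- _ _ _|ac cf cF dF].
  by rewrite set_itv1 integral_set1 subrr.
rewrite (@continuous_FTC2 _ f F) //.
- by apply: continuous_in_subspaceT => x _; exact: cf.
- split.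
  + by move=> x; rewrite in_itv /= => /dF fx; exact: ex_derive.
  + exact/cvg_at_right_filter/cF.
  + exact/cvg_at_left_filter/cF.
- by move=> x; rewrite in_itv /= => /dF fx; rewrite derive1E derive_val.
Qed.

End Calculus.

Section OutageProfile.
Variables (R : realType) (C alpha h : R).
Implicit Types (b t x : R).

Definition outage_level (x : R) : R := C * expR (- (alpha * x)).

Definition clear_radius (x : R) : R := Num.sqrt (outage_level x - h ^+ 2).

Definition atan_primitive (t : R) : R := t - h * atan (t / h).

Definition outage_length (b x : R) : R := 2 * b - 2 * Order.min b (clear_radius x).

Lemma outage_level0 : outage_level 0 = C.
Proof. by rewrite /outage_level mulr0 oppr0 expR0 mulr1. Qed.

Lemma clear_radius0 : clear_radius 0 = Num.sqrt (C - h ^+ 2).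
Proof. by rewrite /clear_radius outage_level0. Qed.

Lemma atan_primitive0 : atan_primitive 0 = 0.
Proof. by rewrite /atan_primitive mul0r atan0 mulr0 subr0. Qed.

Lemma is_derive_outage_level x :
  is_derive x 1 outage_level (- alpha * outage_level x).
Proof.
have dlin : is_derive x 1 (fun x => - (alpha * x)) (- alpha).
  by have := is_deriveN (is_deriveZ alpha (@is_derive_id _ _ x 1)); rewrite /GRing.scale /= mulr1.
have := is_deriveZ C (is_derive1_comp (is_derive_expR _) dlin).
by rewrite /outage_level /GRing.scale /= => d; apply: is_derive_eq d _; ring.
Qed.

Lemma continuous_clear_radius : continuous clear_radius.
Proof.
move=> x; apply: (continuous_comp (f := fun x => outage_level x - h ^+ 2)).
  apply: continuousB; last exact: cst_continuous.
  exact: is_derive_continuous (is_derive_outage_level x).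
exact: sqrt_continuous.
Qed.

Lemma clear_radius_le b x :
  0 <= b -> (clear_radius x <= b) = (outage_level x <= b ^+ 2 + h ^+ 2).
Proof.
move=> b0; rewrite /clear_radius -[b in LHS]ger0_norm // -sqrtr_sqr.
by rewrite ler_sqrt ?sqr_ge0 // lerBlDr.
Qed.

Lemma clear_radius_eq0 x : outage_level x <= h ^+ 2 -> clear_radius x = 0.
Proof. by move=> Kx; apply/eqP; rewrite /clear_radius sqrtr_eq0 subr_le0. Qed.

Lemma clear_radius_id b x :
  0 <= b -> outage_level x = b ^+ 2 + h ^+ 2 -> clear_radius x = b.
Proof. by move=> b0 Kx; rewrite /clear_radius Kx addrK sqrtr_sqr ger0_norm. Qed.

Lemma is_derive_atan_primitive t : h != 0 ->
  is_derive t 1 atan_primitive (t ^+ 2 / (t ^+ 2 + h ^+ 2)).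
Proof.
move=> h0.
have dscale : is_derive t 1 (fun t => t / h) h^-1.
  rewrite (funext (fun t => mulrC t h^-1)).
  by have := is_deriveZ h^-1 (@is_derive_id _ _ t 1); rewrite /GRing.scale /= mulr1.
have := is_deriveB (@is_derive_id _ _ t 1)
  (is_deriveZ h (is_derive1_comp (is_derive1_atan _) dscale)).
move=> d; apply: is_derive_eq d _; rewrite /GRing.scale /=.
by field; rewrite h0 andbT gt_eqF // ltr_wpDl ?sqr_ge0 // lt0r sqrf_eq0 h0 sqr_ge0.
Qed.

Hypotheses (C_gt0 : 0 < C) (alpha_gt0 : 0 < alpha) (h_gt0 : 0 < h).

Lemma outage_level_lt x y : (outage_level x < outage_level y) = (y < x).
Proof. by rewrite /outage_level ltr_pM2l // ltr_expR ltrN2 ltr_pM2l. Qed.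

Lemma outage_level_le x y : (outage_level x <= outage_level y) = (y <= x).
Proof. by rewrite /outage_level ler_pM2l // ler_expR lerN2 ler_pM2l. Qed.

Lemma outage_level_itv a c x :
  a < x < c -> outage_level c < outage_level x < outage_level a.
Proof. by rewrite !outage_level_lt andbC. Qed.

Lemma outage_level_ln t : 0 < t -> outage_level (ln (C / t) / alpha) = t.
Proof.
move=> t_gt0; rewrite /outage_level [alpha * _]mulrC divfK ?lt0r_neq0 // expRN.
by rewrite lnK ?posrE ?divr_gt0 // invf_div mulrC divfK ?lt0r_neq0.
Qed.

(* With u = clear_radius, u' = - alpha (u^2 + h^2) / (2 u) and
   atan_primitive'(u) = u^2 / (u^2 + h^2), so the product is - alpha u / 2. *)
Lemma is_derive_atan_primitive_clear_radius x : h ^+ 2 < outage_level x ->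
  is_derive x 1 (atan_primitive \o clear_radius) (- (alpha * clear_radius x / 2)).
Proof.
rewrite -subr_gt0 => Kx.
have du := is_derive1_comp (g := fun x => outage_level x - h ^+ 2)
  (is_derive1_sqrt Kx) (is_deriveB (is_derive_outage_level x) (is_derive_cst (h ^+ 2) x 1)).
have := is_derive1_comp (is_derive_atan_primitive (clear_radius x) (lt0r_neq0 h_gt0)) du.
move=> d; apply: is_derive_eq d _; rewrite subr0 -/(clear_radius x).
have u0 : 0 < clear_radius x by rewrite sqrtr_gt0.
have -> : outage_level x = clear_radius x ^+ 2 + h ^+ 2.
  by rewrite sqr_sqrtr ?subrK // ltW.
by field; rewrite !lt0r_neq0 // ltr_wpDl ?sqr_ge0 // exprn_gt0.
Qed.

End OutageProfile.

Section OutageIntegral.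
Variables (R : realType) (C alpha h b : R).
Hypotheses (alpha_gt0 : 0 < alpha) (h_gt0 : 0 < h) (b_ge0 : 0 <= b).
Local Notation K := (outage_level C alpha).
Local Notation u := (clear_radius C alpha h).
Local Notation phi := (atan_primitive h).

Lemma continuous_outage_length : continuous (outage_length C alpha h b).
Proof.
move=> x; apply: (@continuous_comp _ _ _ u (fun t => 2 * b - 2 * Order.min b t)).
  exact: continuous_clear_radius.
apply: continuousB; first exact: cst_continuous.
apply: continuousM; first exact: cst_continuous.
by apply: min_fun_continuous; [exact: cst_continuous | move=> ?].
Qed.

Lemma integral_outage_length (D p q : R) : 0 <= p -> p <= q -> q <= D ->
  (forall x, 0 < x < p -> b ^+ 2 + h ^+ 2 < K x) ->
  (forall x, p < x < q -> h ^+ 2 < K x <= b ^+ 2 + h ^+ 2) ->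
  (forall x, q < x < D -> K x <= h ^+ 2) ->
  (\int[lebesgue_measure]_(x in `[0%R, D]) (outage_length C alpha h b x)%:E =
   (2 * b * (D - p) + 4 / alpha * (phi (u q) - phi (u p)))%:E)%E.
Proof.
move=> p0 pq qD covered partial uncovered.
have cf := continuous_outage_length.
have cont_lin (c : R) : continuous (fun x : R => c * x).
  by move=> x; apply: continuousM => //; exact: cst_continuous.
rewrite (integral_itv_cc_split p0 (le_trans pq qD) cf) (integral_itv_cc_split pq qD cf).
have is_derive_lin (c x : R) : is_derive x 1 (fun x => c * x) c.
  by have := is_deriveZ c (@is_derive_id _ _ x 1); rewrite /GRing.scale /= mulr1.
have d_covered x : 0 < x < p -> is_derive x 1 (fun x => 0 * x) (outage_length C alpha h b x).
  move=> /covered Kx; apply: is_derive_eq (is_derive_lin 0 x) _.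
  rewrite /outage_length min_l ?subrr //; apply: ltW.
  by rewrite ltNge clear_radius_le ?b_ge0 // -ltNge.
have d_uncovered x : q < x < D ->
    is_derive x 1 (fun x => 2 * b * x) (outage_length C alpha h b x).
  move=> /uncovered Kx; apply: is_derive_eq (is_derive_lin _ x) _.
  by rewrite /outage_length clear_radius_eq0 // min_r ?b_ge0 // mulr0 subr0.
pose F x := 2 * b * x + 4 / alpha * phi (u x).
have cF : continuous F.
  move=> x; apply: continuousD; first exact: cont_lin.
  apply: continuousM; first exact: cst_continuous.
  apply: continuous_comp; first exact: continuous_clear_radius.
  exact: is_derive_continuous (is_derive_atan_primitive _ (lt0r_neq0 h_gt0)).
have d_partial x : p < x < q -> is_derive x 1 F (outage_length C alpha h b x).
  move=> /partial /andP[Kx_gt Kx_le].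
  have := is_deriveD (is_derive_lin (2 * b) x)
    (is_deriveZ (4 / alpha) (is_derive_atan_primitive_clear_radius h_gt0 Kx_gt)).
  move=> d; apply: is_derive_eq d _.
  rewrite /outage_length min_r ?clear_radius_le ?b_ge0 // /GRing.scale /=.
  by field; rewrite lt0r_neq0.
rewrite (integral_itv_cc_primitive p0 cf (cont_lin 0) d_covered).
rewrite (integral_itv_cc_primitive pq cf cF d_partial).
rewrite (integral_itv_cc_primitive qD cf (cont_lin _) d_uncovered).
by rewrite -!EFinD /F; congr EFin; ring.
Qed.

End OutageIntegral.

Lemma lebesgue_measure_itv_abs_ge (R : realType) (b u : R) : 0 <= u ->
  lebesgue_measure [set y : R | - b <= y <= b /\ u <= `|y|] =
  (2 * b - 2 * Order.min b u)%:E.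
Proof.
move=> u0; have [bu|ub] := ltrP b u.
  rewrite subrr (_ : [set _ | _] = set0) ?measure0 //.
  apply/seteqP; split => // y /= [/andP[y1 y2] uy].
  have : `|y| <= b by rewrite ler_norml y1 y2.
  lra.
rewrite (_ : [set _ | _] = `[- b, b] `\` `]- u, u[); last first.
  apply/seteqP; split => y /=; rewrite !in_itv /= -ltr_norml.
    by move=> [-> uy]; split => //; apply/negP; rewrite -leNgt.
  by move=> [-> /negP]; rewrite -leNgt.
rewrite measureD //=; last by rewrite lebesgue_measure_itv; case: ifP => _; rewrite ?ltry.
rewrite setIidr; last by move=> y /=; rewrite !in_itv /= => /andP[? ?]; apply/andP; lra.
rewrite !lebesgue_measure_itv /= !lte_fin.
have [u_eq0|/negPf u_neq0] := eqVneq u 0.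
  rewrite u_eq0 oppr0 ltxx sube0 in ub *.
  case: ltrP => bb; last by congr EFin; lra.
  by rewrite -EFinD; congr EFin; lra.
have u_gt0 : 0 < u by rewrite lt0r u_neq0.
by rewrite !ifT -?EFinD; [congr EFin; lra | lra | lra].
Qed.

Section OutageProbability.
Variables (R : realType) (eta Pt sigma2 gthr alpha h Dx Dy : R).
Hypotheses (sigma2_gt0 : 0 < sigma2) (gthr_gt0 : 0 < gthr) (h_gt0 : 0 < h).
Local Notation C := (eta * Pt / (gthr * sigma2)).

Lemma snr_r_le_thr x y :
  (snr_r eta Pt sigma2 alpha h x y <= gthr) = (clear_radius C alpha h x <= `|y|).
Proof.
rewrite clear_radius_le // real_normK ?num_real //.
have yh_gt0 : 0 < y ^+ 2 + h ^+ 2 by rewrite ltr_wpDl ?sqr_ge0 ?exprn_gt0.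
rewrite /snr_r subrr expr0n add0r ler_pdivrMr ?mulr_gt0 //.
rewrite /outage_level [in RHS]mulrAC [in RHS]ler_pdivrMr ?mulr_gt0 //.
by congr (_ <= _); ring.
Qed.

Lemma Pout_integral : Pout eta Pt sigma2 gthr alpha h Dx Dy =
  (((Dx * Dy)^-1)%:E *
   \int[lebesgue_measure]_(x in `[0%R, Dx]) (outage_length C alpha h (Dy / 2) x)%:E)%E.
Proof.
rewrite /Pout /product_measure1; congr (_ * _)%E.
rewrite [RHS]integral_mkcond; apply: eq_integral => x _ /=.
rewrite /patch; case: ifPn => [|/negP] xD.
  rewrite -lebesgue_measure_itv_abs_ge; last exact: sqrtr_ge0.
  congr (lebesgue_measure _); apply/seteqP; split => y /=;
    rewrite /xsection /outage_set /= inE /= snr_r_le_thr.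
    by case=> _ [].
  by move: xD; rewrite inE /= in_itv.
rewrite (_ : xsection _ x = set0) ?measure0 //.
apply/seteqP; split => // y /=; rewrite /xsection /outage_set /= inE /=.
by move=> [x_in _]; apply: xD; apply: mem_set; rewrite /= in_itv.
Qed.

End OutageProbability.

Section OutageCases.
Variables (R : realType) (eta Pt sigma2 gthr alpha h Dx Dy : R).
Hypotheses (eta_gt0 : 0 < eta) (Pt_gt0 : 0 < Pt) (sigma2_gt0 : 0 < sigma2)
  (gthr_gt0 : 0 < gthr) (alpha_gt0 : 0 < alpha) (h_gt0 : 0 < h)
  (Dx_gt0 : 0 < Dx) (Dy_gt0 : 0 < Dy).
Local Notation C := (eta * Pt / (gthr * sigma2)).
Local Notation E := (C * expR (- (alpha * Dx))).
Local Notation P := (Pout eta Pt sigma2 gthr alpha h Dx Dy).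
Local Notation K := (outage_level C alpha).
Local Notation u := (clear_radius C alpha h).
Local Notation phi := (atan_primitive h).

Lemma snr_scale_gt0 : 0 < C.
Proof. by rewrite divr_gt0 ?mulr_gt0. Qed.

Lemma Pout_piecewise p q : 0 <= p -> p <= q -> q <= Dx ->
  (forall x, 0 < x < p -> Dy ^+ 2 / 4 + h ^+ 2 < K x) ->
  (forall x, p < x < q -> h ^+ 2 < K x <= Dy ^+ 2 / 4 + h ^+ 2) ->
  (forall x, q < x < Dx -> K x <= h ^+ 2) ->
  P = ((Dx * Dy)^-1 * (Dy * (Dx - p) + 4 / alpha * (phi (u q) - phi (u p))))%:E.
Proof.
have -> : Dy ^+ 2 / 4 = (Dy / 2) ^+ 2 by field.
move=> p0 pq qD covered partial uncovered.
rewrite Pout_integral // (integral_outage_length _ _ _ p0 pq qD covered partial uncovered) //.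
  by rewrite -EFinM [2 * _]mulrC divfK // pnatr_eq0.
by rewrite divr_ge0 ?ltW.
Qed.

Let Kle := outage_level_le snr_scale_gt0 alpha_gt0.
Let Kitv := outage_level_itv snr_scale_gt0 alpha_gt0.

(* [x_band] is where the clear band [-u, u] shrinks to [-Dy/2, Dy/2] and
   [x_clear] is where it vanishes. *)
Let x_band := ln (C / (Dy ^+ 2 / 4 + h ^+ 2)) / alpha.
Let x_clear := ln (C / h ^+ 2) / alpha.

Lemma outage_level_band : K x_band = Dy ^+ 2 / 4 + h ^+ 2.
Proof.
by rewrite outage_level_ln ?snr_scale_gt0 // ltr_wpDl ?exprn_gt0 ?divr_ge0 ?sqr_ge0.
Qed.

Lemma outage_level_clear : K x_clear = h ^+ 2.
Proof. by rewrite outage_level_ln ?snr_scale_gt0 // exprn_gt0. Qed.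

Lemma clear_radius_band : u x_band = Dy / 2.
Proof.
apply: clear_radius_id; rewrite ?divr_ge0 ?ltW // outage_level_band.
by congr (_ + _); field.
Qed.

Lemma clear_radius_clear : u x_clear = 0.
Proof. by apply: clear_radius_eq0; rewrite outage_level_clear. Qed.

Lemma ln_band : ln (h ^+ 2 / C + Dy ^+ 2 / (4 * C)) = - (alpha * x_band).
Proof.
have -> : h ^+ 2 / C + Dy ^+ 2 / (4 * C) = (C / (Dy ^+ 2 / 4 + h ^+ 2))^-1.
  by rewrite invf_div; field; rewrite !lt0r_neq0 // ltr_wpDl ?sqr_ge0 ?mulr_gt0 ?exprn_gt0.
rewrite lnV ?posrE ?divr_gt0 ?mulr_gt0 ?ltr_wpDl ?exprn_gt0 ?divr_ge0 ?sqr_ge0 //.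
by rewrite /x_band [alpha * _]mulrC divfK ?lt0r_neq0.
Qed.

Lemma Pout_case_i : C <= h ^+ 2 -> P = 1%E.
Proof.
move=> Ch; rewrite (@Pout_piecewise 0 0) ?lexx ?ltW //.
- by rewrite subrr !mulr0 subr0 addr0 (mulrC Dy) mulVf // mulf_neq0 ?lt0r_neq0.
- by move=> x /Kitv/andP[]; lra.
- by move=> x /Kitv/andP[]; lra.
- by move=> x /Kitv/andP[]; rewrite outage_level0; lra.
Qed.

Lemma Pout_case_ii : h ^+ 2 <= C -> C - Dy ^+ 2 / 4 <= h ^+ 2 -> E <= h ^+ 2 ->
  P = (1 + 4 / (alpha * Dx * Dy) *
         (h * atan (Num.sqrt (C - h ^+ 2) / h) - Num.sqrt (C - h ^+ 2)))%:E.
Proof.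
move=> hC Cb Eh; rewrite (@Pout_piecewise 0 x_clear) ?lexx //.
- rewrite clear_radius_clear clear_radius0 atan_primitive0 /atan_primitive.
  by congr EFin; field; rewrite !lt0r_neq0.
- by rewrite -Kle outage_level_clear outage_level0.
- by rewrite -Kle outage_level_clear.
- by move=> x /Kitv/andP[]; lra.
- by move=> x /Kitv/andP[]; rewrite outage_level_clear outage_level0; lra.
- by move=> x /Kitv/andP[]; rewrite outage_level_clear; lra.
Qed.

Lemma Pout_case_iii : h ^+ 2 <= C - Dy ^+ 2 / 4 -> E <= h ^+ 2 ->
  P = (1 + (ln (h ^+ 2 / C + Dy ^+ 2 / (4 * C)) - 2) / (alpha * Dx)
         + 4 * h * atan (Dy / (2 * h)) / (alpha * Dx * Dy))%:E.
Proof.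
move=> Cb Eh; rewrite (@Pout_piecewise x_band x_clear).
- rewrite clear_radius_clear clear_radius_band atan_primitive0 /atan_primitive ln_band.
  rewrite (_ : Dy / (2 * h) = Dy / 2 / h); last by rewrite invfM mulrA.
  by congr EFin; field; rewrite !lt0r_neq0.
- by rewrite -Kle outage_level_band outage_level0; lra.
- by rewrite -Kle outage_level_band outage_level_clear lerDr divr_ge0 ?sqr_ge0.
- by rewrite -Kle outage_level_clear.
- by move=> x /Kitv/andP[]; rewrite outage_level_band; lra.
- by move=> x /Kitv/andP[]; rewrite outage_level_band outage_level_clear; lra.
- by move=> x /Kitv/andP[]; rewrite outage_level_clear; lra.
Qed.

Lemma Pout_case_iv : C - Dy ^+ 2 / 4 <= h ^+ 2 -> h ^+ 2 <= E ->
  P = (1 + 4 / (alpha * Dx * Dy) *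
         (Num.sqrt (E - h ^+ 2) - h * atan (Num.sqrt (E - h ^+ 2) / h)
          - Num.sqrt (C - h ^+ 2) + h * atan (Num.sqrt (C - h ^+ 2) / h)))%:E.
Proof.
move=> Cb hE; rewrite (@Pout_piecewise 0 Dx) ?lexx ?ltW //.
- rewrite clear_radius0 /atan_primitive /clear_radius /outage_level.
  by congr EFin; field; rewrite !lt0r_neq0.
- by move=> x /Kitv/andP[]; rewrite /outage_level; lra.
- by move=> x /Kitv/andP[]; rewrite outage_level0 /outage_level; lra.
- by move=> x /Kitv/andP[]; rewrite /outage_level; lra.
Qed.

Lemma Pout_case_v : h ^+ 2 <= C - Dy ^+ 2 / 4 -> h ^+ 2 <= E -> E - Dy ^+ 2 / 4 <= h ^+ 2 ->
  P = (1 + 4 / (alpha * Dx * Dy) *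
         (Num.sqrt (E - h ^+ 2) - h * atan (Num.sqrt (E - h ^+ 2) / h)
          - Dy / 2 + h * atan (Dy / (2 * h)))
       + ln (h ^+ 2 / C + Dy ^+ 2 / (4 * C)) / (alpha * Dx))%:E.
Proof.
move=> Cb hE Eb; rewrite (@Pout_piecewise x_band Dx) ?lexx //.
- rewrite clear_radius_band /atan_primitive ln_band /clear_radius /outage_level.
  rewrite (_ : Dy / (2 * h) = Dy / 2 / h); last by rewrite invfM mulrA.
  by congr EFin; field; rewrite !lt0r_neq0.
- by rewrite -Kle outage_level_band outage_level0; lra.
- by rewrite -Kle outage_level_band /outage_level; lra.
- by move=> x /Kitv/andP[]; rewrite outage_level_band /outage_level; lra.
- by move=> x /Kitv/andP[]; rewrite outage_level_band /outage_level; lra.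
- by move=> x /Kitv/andP[]; rewrite /outage_level; lra.
Qed.

Lemma Pout_case_vi : h ^+ 2 <= E - Dy ^+ 2 / 4 -> P = 0%E.
Proof.
move=> Eb; rewrite (@Pout_piecewise Dx Dx) ?lexx ?ltW //.
- by rewrite !subrr !mulr0 addr0 mulr0.
- by move=> x /Kitv/andP[]; rewrite /outage_level; lra.
- by move=> x /Kitv/andP[]; rewrite /outage_level; lra.
- by move=> x /Kitv/andP[]; rewrite /outage_level; lra.
Qed.

End OutageCases.

Theorem proposition1 (R : realType) (eta Pt sigma2 gthr alpha h Dx Dy : R) :
  0 < eta -> 0 < Pt -> 0 < sigma2 -> 0 < gthr ->
  0 < alpha -> 0 < h -> 0 < Dx -> 0 < Dy ->
  let C := eta * Pt / (gthr * sigma2) in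
  let P := Pout eta Pt sigma2 gthr alpha h Dx Dy in
  let E := C * expR (- (alpha * Dx)) in
  (* (i) *)
  (C <= h ^+ 2 -> P = 1%E) /\
  (* (ii) *)
  (h ^+ 2 <= C -> C - Dy ^+ 2 / 4 <= h ^+ 2 -> E <= h ^+ 2 ->
     P = (1 + 4 / (alpha * Dx * Dy) *
            (h * atan (Num.sqrt (C - h ^+ 2) / h) - Num.sqrt (C - h ^+ 2)))%:E) /\
  (* (iii) *)
  (h ^+ 2 <= C - Dy ^+ 2 / 4 -> E <= h ^+ 2 ->
     P = (1 + (ln (h ^+ 2 / C + Dy ^+ 2 / (4 * C)) - 2) / (alpha * Dx)
            + 4 * h * atan (Dy / (2 * h)) / (alpha * Dx * Dy))%:E) /\
  (* (iv) *)
  (C - Dy ^+ 2 / 4 <= h ^+ 2 -> h ^+ 2 <= E ->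
     P = (1 + 4 / (alpha * Dx * Dy) *
            (Num.sqrt (E - h ^+ 2) - h * atan (Num.sqrt (E - h ^+ 2) / h)
             - Num.sqrt (C - h ^+ 2) + h * atan (Num.sqrt (C - h ^+ 2) / h)))%:E) /\
  (* (v) *)
  (h ^+ 2 <= C - Dy ^+ 2 / 4 -> h ^+ 2 <= E -> E - Dy ^+ 2 / 4 <= h ^+ 2 ->
     P = (1 + 4 / (alpha * Dx * Dy) *
            (Num.sqrt (E - h ^+ 2) - h * atan (Num.sqrt (E - h ^+ 2) / h)
             - Dy / 2 + h * atan (Dy / (2 * h)))
          + ln (h ^+ 2 / C + Dy ^+ 2 / (4 * C)) / (alpha * Dx))%:E) /\
  (* (vi) *)
  (h ^+ 2 <= E - Dy ^+ 2 / 4 -> P = 0%E).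
Proof.
move=> eta_gt0 Pt_gt0 sigma2_gt0 gthr_gt0 alpha_gt0 h_gt0 Dx_gt0 Dy_gt0 C P E.
split; first exact: Pout_case_i.
split; first exact: Pout_case_ii.
split; first exact: Pout_case_iii.
split; first exact: Pout_case_iv.
split; first exact: Pout_case_v.
exact: Pout_case_vi.
Qed.
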